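(* Assume $g$ satisfies (Hg). Let $a\in(0,1)$, $A\in[a,1)$, $k>1$ and $l\in(1,k)$, and set $$d^*(a;l,A,k)=\frac{1}{(k-l)(1-\frac1l)}\max_{s\in[1-\frac aA,1]}\frac{-g(A(1-s);a)}{As}.$$ Then for every $d>d^*(a;l,A,k)$ there exists $\bar c<0$ such that $\mathcal I_{a,d,k}[\bar c,\Psi_{l,A}](\xi)\le0$ for all $\xi\in\mathbb R$.
   Context: $\mathcal I_{a,d,k}[c,\Phi](\xi):=-c\Phi'(\xi)-d\big(\Phi(\xi-1)-(k+1)\Phi(\xi)+k\Phi(\xi+1)\big)-g(\Phi(\xi);a)$. The ($C^1$) function $\Psi_{l,A}:\mathbb R\to\mathbb R$ is $$\Psi_{l,A}(\xi)=\begin{cases}A\big(1-l-\frac{\log l}{3}\big), & \xi\le-1-\frac1l,\\ A\,p_l(\xi), & -1-\frac1l<\xi\le-1,\\ A(1-l^{-\xi}), & \xi>-1,\end{cases}\qquad p_l(\xi)=\frac{\log l}{3}\big(l\xi+1+l\big)^3+1-l-\frac{\log l}{3}.$$ A function $g:\mathbb R\times[0,1]\to\mathbb R$, $(u,a)\mapsto g(u;a)$, satisfies (Hg) if it is $C^1$ and for every $a\in(0,1)$: $g(0;a)=g(a;a)=g(1;a)=0$, $g'(0;a)<0$, $g'(1;a)<0$, $g'(a;a)>0$ (where $g'=\partial_u g$), $g(v;a)>0$ for $v\in(-\infty,0)\cup(a,1)$ and $g(v;a)<0$ for $v\in(0,a)\cup(1,\infty)$. *)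

From Stdlib Require Import Reals Lra.
From Coquelicot Require Import Coquelicot.
Open Scope R_scope.

Definition cont_on_Rx01 (F : R -> R -> R) : Prop :=
  forall u a, 0 <= a <= 1 ->
    forall eps, 0 < eps -> exists delta, 0 < delta /\
      forall u' a', 0 <= a' <= 1 -> Rabs (u' - u) < delta -> Rabs (a' - a) < delta ->
        Rabs (F u' a' - F u a) < eps.

(* g is C^1 on R x [0,1]: both partial derivatives exist (the one in a is
   taken relative to [0,1], i.e. one-sided at the endpoints) and are
   jointly continuous on R x [0,1]; gu is the partial derivative in u. *)
Definition C1_on_Rx01 (g : R -> R -> R) (gu : R -> R -> R) : Prop :=
  cont_on_Rx01 g /\ cont_on_Rx01 gu /\
  (forall u a, 0 <= a <= 1 -> is_derive (fun v => g v a) u (gu u a)) /\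
  exists ga : R -> R -> R, cont_on_Rx01 ga /\
    forall u a, 0 <= a <= 1 ->
      filterlim (fun b => (g u b - g u a) / (b - a))
        (within (fun b => 0 <= b <= 1 /\ b <> a) (locally a)) (locally (ga u a)).

(* Hypothesis (Hg); g u a stands for g(u;a), gu u a for g'(u;a) = d/du g(u;a). *)
Definition Hg (g : R -> R -> R) : Prop :=
  exists gu : R -> R -> R, C1_on_Rx01 g gu /\
  forall a, 0 < a < 1 ->
    g 0 a = 0 /\ g a a = 0 /\ g 1 a = 0 /\
    gu 0 a < 0 /\ gu 1 a < 0 /\ 0 < gu a a /\
    (forall v, (v < 0 \/ (a < v < 1)) -> 0 < g v a) /\
    (forall v, ((0 < v < a) \/ 1 < v) -> g v a < 0).

Definition opI (g : R -> R -> R) (a d k c : R) (Phi : R -> R) (xi : R) : R :=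
  - c * Derive Phi xi
  - d * (Phi (xi - 1) - (k + 1) * Phi xi + k * Phi (xi + 1))
  - g (Phi xi) a.

Definition p_l (l xi : R) : R :=
  ln l / 3 * (l * xi + 1 + l) ^ 3 + 1 - l - ln l / 3.

Definition Psi (l A : R) (xi : R) : R :=
  if Rle_dec xi (-1 - / l) then A * (1 - l - ln l / 3)
  else if Rle_dec xi (-1) then A * p_l l xi
  else A * (1 - Rpower l (- xi)).

(* The maximum in d^*: taken as the supremum of -g(A(1-s);a)/(A s) over
   s in [1 - a/A, 1] with s > 0 (s = 0 only occurs when A = a, where the
   quotient is defined by continuous extension; the sup equals that max). *)
Definition dstar_max (g : R -> R -> R) (a l A k : R) : Rbar :=
  Lub_Rbar (fun y => exists s, 1 - a / A <= s <= 1 /\ 0 < s /\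
                               y = - g (A * (1 - s)) a / (A * s)).

Definition dstar (g : R -> R -> R) (a l A k : R) : Rbar :=
  Rbar_mult (Finite (/ ((k - l) * (1 - / l)))) (dstar_max g a l A k).

From Stdlib Require Import Reals Lra.
From Coquelicot Require Import Coquelicot.
Open Scope R_scope.

(* [Psi] is C^1 and made of three pieces: a negative constant, a cubic and
   [A (1 - l^(-xi))].  On the two left pieces [Psi < 0], so [g (Psi xi) > 0],
   while the second difference of [Psi] is nonnegative, resp. at least
   [A ln l k (l - 1) / l], which absorbs [-c Psi'] for small [|c|].  On the
   exponential piece, with [s = l^(-xi)], the term [-c Psi'] equals
   [-c ln l A s] and the second difference is at least [(k - l)(1 - 1/l) A s],
   whereas [d > d^*] yields [-g (A (1 - s)) <= M A s] for all [s > 0] with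
   [M < d (k - l)(1 - 1/l)].  A speed [c < 0] close enough to [0] thus makes
   [I[c, Psi] <= 0] on all three pieces. *)

Lemma ln_gt_0 x : 1 < x -> 0 < ln x.
Proof. intros Hx; rewrite <- ln_1; apply ln_increasing; lra. Qed.

Lemma Rinv_gt1_bounds x : 1 < x -> 0 < / x < 1.
Proof.
  intros Hx; split; [apply Rinv_0_lt_compat; lra|].
  rewrite <- Rinv_1; apply Rinv_1_lt_contravar; lra.
Qed.

Lemma one_plus_ln_le_Rpower x y : 1 + y * ln x <= Rpower x y.
Proof. unfold Rpower; rewrite Rmult_comm; apply exp_ineq1_le. Qed.

Lemma Rpower_shift x y : 0 < x -> Rpower x (- y) = Rpower x (- (y + 1)) * x.
Proof.
  intros Hx; replace (- y) with (- (y + 1) + 1) by ring.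
  rewrite Rpower_plus, Rpower_1 by exact Hx; reflexivity.
Qed.

Lemma Rpower_le_sub_ln x y : 1 < x -> 0 <= y <= 1 ->
  Rpower x y <= x - (1 - y) * ln x.
Proof.
  intros Hx Hy.
  assert (Hu : 1 <= Rpower x y).
  { rewrite <- (Rpower_O x) by lra; apply Rle_Rpower; lra. }
  assert (Hv := one_plus_ln_le_Rpower x (1 - y)).
  assert (Hv0 : 0 <= (1 - y) * ln x) by (apply Rmult_le_pos; [lra | left; apply ln_gt_0; lra]).
  assert (Huv : Rpower x y * Rpower x (1 - y) = x).
  { rewrite <- Rpower_plus; replace (y + (1 - y)) with 1 by ring; apply Rpower_1; lra. }
  (* [(u - 1) (v - 1) >= 0] for [u = x^y], [v = x^(1-y)], and [u v = x] *)
  nra.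
Qed.

Lemma is_derive_glue (f f1 f2 : R -> R) x0 r D : 0 < r ->
  (forall y, x0 - r < y <= x0 -> f y = f1 y) ->
  (forall y, x0 <= y < x0 + r -> f y = f2 y) ->
  is_derive f1 x0 D -> is_derive f2 x0 D -> is_derive f x0 D.
Proof.
  intros Hr E1 E2 D1 D2; apply is_derive_Reals; intros eps Heps.
  destruct (proj1 (is_derive_Reals _ _ _) D1 eps Heps) as [d1 Hd1].
  destruct (proj1 (is_derive_Reals _ _ _) D2 eps Heps) as [d2 Hd2].
  assert (Hd : 0 < Rmin r (Rmin d1 d2)).
  { apply Rmin_pos; [lra | apply Rmin_pos; apply cond_pos]. }
  exists (mkposreal _ Hd); simpl; intros h Hh0 Hh.
  assert (Hr' := Rmin_l r (Rmin d1 d2)). assert (Hd' := Rmin_r r (Rmin d1 d2)).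
  assert (Hd1' := Rmin_l d1 d2). assert (Hd2' := Rmin_r d1 d2).
  destruct (Rle_or_lt h 0) as [Hn | Hp].
  - rewrite Rabs_left1 in Hh by lra.
    rewrite (E1 (x0 + h)), (E1 x0) by lra.
    apply Hd1; [exact Hh0 | rewrite Rabs_left1; lra].
  - rewrite Rabs_right in Hh by lra.
    rewrite (E2 (x0 + h)), (E2 x0) by lra.
    apply Hd2; [exact Hh0 | rewrite Rabs_right; lra].
Qed.

Section Psi_profile.

Variables l A : R.
Hypothesis Hl : 1 < l.

Lemma Psi_flat y : y <= -1 - / l -> Psi l A y = A * (1 - l - ln l / 3).
Proof. intros Hy; unfold Psi; destruct (Rle_dec y (-1 - / l)); lra. Qed.

Lemma Psi_cubic y : -1 - / l < y <= -1 -> Psi l A y = A * p_l l y.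
Proof.
  intros Hy; unfold Psi.
  destruct (Rle_dec y (-1 - / l)); [lra|]; destruct (Rle_dec y (-1)); lra.
Qed.

Lemma Psi_exp y : -1 < y -> Psi l A y = A * (1 - Rpower l (- y)).
Proof.
  intros Hy; assert (Hil := Rinv_gt1_bounds l Hl); unfold Psi.
  destruct (Rle_dec y (-1 - / l)); [lra|]; destruct (Rle_dec y (-1)); [lra | reflexivity].
Qed.

Lemma p_l_left : p_l l (-1 - / l) = 1 - l - ln l / 3.
Proof.
  unfold p_l; replace (l * (-1 - / l) + 1 + l) with 0 by (field; lra); ring.
Qed.

Lemma p_l_right : p_l l (-1) = 1 - Rpower l (- -1).
Proof. unfold p_l; replace (- -1) with 1 by ring; rewrite Rpower_1 by lra; ring. Qed.

Lemma is_derive_Psi_cubic_branch y :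
  is_derive (fun y => A * p_l l y) y (A * ln l * l * (l * y + 1 + l) ^ 2).
Proof. unfold p_l; auto_derive; [exact I | field]. Qed.

Lemma is_derive_Psi_exp_branch y :
  is_derive (fun y => A * (1 - Rpower l (- y))) y (A * ln l * Rpower l (- y)).
Proof. unfold Rpower; auto_derive; [exact I | ring]. Qed.

Lemma Derive_Psi_flat xi : xi <= -1 - / l -> Derive (Psi l A) xi = 0.
Proof.
  intros [Hlt | ->]; apply is_derive_unique.
  - apply (is_derive_ext_loc (fun _ => A * (1 - l - ln l / 3))).
    + apply (filter_imp (fun y => y < -1 - / l)); [intros y Hy; rewrite Psi_flat; lra|].
      apply open_lt; exact Hlt.
    + apply (is_derive_const (K := R_AbsRing) (V := R_NormedModule)).
  - assert (Hil := Rinv_gt1_bounds l Hl).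
    apply (is_derive_glue _ (fun _ => A * (1 - l - ln l / 3)) (fun y => A * p_l l y) _ (/ l)).
    + lra.
    + intros y Hy; apply Psi_flat; lra.
    + intros y [[Hy | <-] Hy']; [apply Psi_cubic; lra | rewrite Psi_flat, p_l_left; lra].
    + apply (is_derive_const (K := R_AbsRing) (V := R_NormedModule)).
    + replace 0 with (A * ln l * l * (l * (-1 - / l) + 1 + l) ^ 2) by (field; lra).
      apply is_derive_Psi_cubic_branch.
Qed.

Lemma Derive_Psi_cubic xi : -1 - / l < xi <= -1 ->
  Derive (Psi l A) xi = A * ln l * l * (l * xi + 1 + l) ^ 2.
Proof.
  intros [Hxl [Hxr | ->]]; apply is_derive_unique.
  - apply (is_derive_ext_loc (fun y => A * p_l l y)).
    + apply (filter_imp (fun y => -1 - / l < y /\ y < -1)).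
      * intros y Hy; rewrite Psi_cubic; lra.
      * apply filter_and; [apply open_gt | apply open_lt]; lra.
    + apply is_derive_Psi_cubic_branch.
  - assert (Hil := Rinv_gt1_bounds l Hl).
    apply (is_derive_glue _ (fun y => A * p_l l y) (fun y => A * (1 - Rpower l (- y))) _ (/ l)).
    + lra.
    + intros y Hy; apply Psi_cubic; lra.
    + intros y [[Hy | <-] Hy']; [apply Psi_exp; lra | rewrite Psi_cubic, p_l_right; lra].
    + apply is_derive_Psi_cubic_branch.
    + replace (A * ln l * l * (l * -1 + 1 + l) ^ 2) with (A * ln l * Rpower l (- -1))
        by (replace (- -1) with 1 by ring; rewrite Rpower_1 by lra; ring).
      apply is_derive_Psi_exp_branch.
Qed.

Lemma Derive_Psi_exp xi : -1 < xi -> Derive (Psi l A) xi = A * ln l * Rpower l (- xi).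
Proof.
  intros Hx; apply is_derive_unique, (is_derive_ext_loc (fun y => A * (1 - Rpower l (- y)))).
  - apply (filter_imp (fun y => -1 < y)); [intros y Hy; rewrite Psi_exp; lra|].
    apply open_gt; exact Hx.
  - apply is_derive_Psi_exp_branch.
Qed.

Lemma cubic_variable_bounds y : -1 - / l < y <= -1 -> 0 < l * y + 1 + l <= 1.
Proof.
  intros Hy; split; [|nra].
  replace (l * y + 1 + l) with (l * (y - (-1 - / l))) by (field; lra).
  apply Rmult_lt_0_compat; lra.
Qed.

Hypothesis HA : 0 < A.

Lemma Psi_lt_0 y : y <= -1 -> Psi l A y < 0.
Proof.
  intros Hy; assert (HL := ln_gt_0 l Hl).
  destruct (Rle_dec y (-1 - / l)) as [Hf | Hc].
  - rewrite Psi_flat by exact Hf; nra.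
  - rewrite Psi_cubic by lra; unfold p_l.
    assert (Ht := cubic_variable_bounds y (conj (Rnot_le_lt _ _ Hc) Hy)).
    assert (Ht3 : (l * y + 1 + l) ^ 3 <= 1) by (rewrite <- (pow1 3); apply pow_incr; lra).
    assert (ln l / 3 * (l * y + 1 + l) ^ 3 <= ln l / 3) by nra.
    nra.
Qed.

Lemma Psi_ge_floor y : A * (1 - l - ln l / 3) <= Psi l A y.
Proof.
  assert (HL := ln_gt_0 l Hl).
  destruct (Rle_dec y (-1 - / l)) as [Hf | Hf]; [rewrite Psi_flat; lra|].
  destruct (Rle_dec y (-1)) as [Hc | He].
  - rewrite Psi_cubic by lra; apply Rmult_le_compat_l; [lra|]; unfold p_l.
    assert (Ht := cubic_variable_bounds y (conj (Rnot_le_lt _ _ Hf) Hc)).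
    assert (0 <= ln l / 3 * (l * y + 1 + l) ^ 3) by (apply Rmult_le_pos; [|apply pow_le]; lra).
    lra.
  - rewrite Psi_exp by lra; apply Rmult_le_compat_l; [lra|].
    assert (Hlt : Rpower l (- y) < Rpower l 1) by (apply Rpower_lt; lra).
    rewrite Rpower_1 in Hlt by lra; lra.
Qed.

Lemma Psi_ge_exp_branch y : A * (1 - Rpower l (- y)) <= Psi l A y.
Proof.
  assert (HL := ln_gt_0 l Hl); assert (Hil := Rinv_gt1_bounds l Hl).
  destruct (Rle_dec y (-1 - / l)) as [Hf | Hf].
  - rewrite Psi_flat by exact Hf; apply Rmult_le_compat_l; [lra|].
    assert (Hm : Rpower l (1 + / l) <= Rpower l (- y)) by (apply Rle_Rpower; lra).
    rewrite Rpower_plus, Rpower_1 in Hm by lra.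
    assert (Hi := one_plus_ln_le_Rpower l (/ l)).
    assert (E : l * (/ l * ln l) = ln l) by (field; lra).
    nra.
  - destruct (Rle_dec y (-1)) as [Hc | He]; [|rewrite Psi_exp by lra; lra].
    rewrite Psi_cubic by lra; apply Rmult_le_compat_l; [lra|].
    rewrite (Rpower_shift l y) by lra.
    assert (Hi := one_plus_ln_le_Rpower l (- (y + 1))).
    assert (Ht := cubic_variable_bounds y (conj (Rnot_le_lt _ _ Hf) Hc)).
    unfold p_l; set (t := l * y + 1 + l) in *.
    assert (Hlow : l - (t - 1) * ln l <= Rpower l (- (y + 1)) * l).
    { replace (l - (t - 1) * ln l) with ((1 + - (y + 1) * ln l) * l) by (unfold t; ring).
      apply Rmult_le_compat_r; lra. }
    assert (Hgap : 0 <= ln l / 3 * ((t - 1) ^ 2 * (t + 2))).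
    { apply Rmult_le_pos; [lra | apply Rmult_le_pos; [apply pow2_ge_0 | lra]]. }
    assert (E : ln l / 3 * t ^ 3 + 1 - l - ln l / 3 - (1 - l + (t - 1) * ln l)
                = ln l / 3 * ((t - 1) ^ 2 * (t + 2))) by field.
    lra.
Qed.

End Psi_profile.

Definition second_diff (k : R) (Phi : R -> R) (xi : R) : R :=
  Phi (xi - 1) - (k + 1) * Phi xi + k * Phi (xi + 1).

Lemma opI_second_diff g a d k c Phi xi :
  opI g a d k c Phi xi = - c * Derive Phi xi - d * second_diff k Phi xi - g (Phi xi) a.
Proof. reflexivity. Qed.

Section Psi_second_diff.

Variables l A k : R.
Hypotheses (Hl : 1 < l) (HA : 0 < A).

Lemma second_diff_Psi_flat xi : 0 <= k -> xi <= -1 - / l ->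
  0 <= second_diff k (Psi l A) xi.
Proof.
  intros Hk Hx; unfold second_diff.
  rewrite (Psi_flat l A (xi - 1)), (Psi_flat l A xi) by lra.
  assert (H := Psi_ge_floor l A Hl HA (xi + 1)).
  nra.
Qed.

Lemma second_diff_Psi_cubic xi : l <= k -> -1 - / l < xi <= -1 ->
  A * ln l * k * (l - 1) / l <= second_diff k (Psi l A) xi.
Proof.
  intros Hk Hx; assert (HL := ln_gt_0 l Hl); assert (Hil := Rinv_gt1_bounds l Hl).
  assert (Ht := cubic_variable_bounds l Hl xi Hx).
  unfold second_diff.
  rewrite (Psi_flat l A (xi - 1)), (Psi_cubic l A xi), (Psi_exp l A Hl (xi + 1)) by lra.
  assert (Hu : Rpower l (- (xi + 1)) <= l - (1 - - (xi + 1)) * ln l)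
    by (apply Rpower_le_sub_ln; lra).
  unfold p_l; set (t := l * xi + 1 + l) in *.
  set (Q := k / 3 * (1 - t ^ 3) + k * t / l - t ^ 3 / 3).
  (* the bound for [Rpower] turns the difference into [A ln l (k (l - 1) / l + Q)] *)
  assert (HQ : 0 <= Q).
  { assert (Ht3 : t ^ 3 <= t) by (simpl; nra).
    assert (Hkt : t <= k * t / l).
    { apply Rmult_le_reg_r with l; [lra|].
      replace (k * t / l * l) with (k * t) by (field; lra); nra. }
    assert (0 <= k / 3 * (1 - t ^ 3)) by (apply Rmult_le_pos; lra).
    unfold Q; lra. }
  assert (E : A * (1 - l - ln l / 3) - (k + 1) * (A * (ln l / 3 * t ^ 3 + 1 - l - ln l / 3))
              + k * (A * (1 - (l - (1 - - (xi + 1)) * ln l)))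
              = A * ln l * k * (l - 1) / l + A * ln l * Q).
  { unfold Q, t; field; lra. }
  assert (0 <= A * ln l * Q) by (apply Rmult_le_pos; [apply Rmult_le_pos|]; lra).
  assert (A * k * Rpower l (- (xi + 1)) <= A * k * (l - (1 - - (xi + 1)) * ln l))
    by (apply Rmult_le_compat_l; [apply Rmult_le_pos|]; lra).
  lra.
Qed.

Lemma second_diff_Psi_exp xi : -1 < xi ->
  A * Rpower l (- xi) * ((k - l) * (1 - / l)) <= second_diff k (Psi l A) xi.
Proof.
  intros Hx; unfold second_diff.
  assert (Hprev := Psi_ge_exp_branch l A Hl HA (xi - 1)).
  rewrite (Psi_exp l A Hl xi), (Psi_exp l A Hl (xi + 1)) by lra.
  rewrite (Rpower_shift l (xi - 1)) in Hprev by lra.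
  replace (xi - 1 + 1) with xi in Hprev by ring.
  rewrite (Rpower_shift l xi) in * by lra.
  set (s := Rpower l (- (xi + 1))) in *.
  assert (E : A * (1 - s * l * l) - (k + 1) * (A * (1 - s * l)) + k * (A * (1 - s))
              = A * (s * l) * ((k - l) * (1 - / l))) by (field; lra).
  lra.
Qed.

End Psi_second_diff.

Lemma Lub_Rbar_scal_lt (S : R -> Prop) (K d : R) : 0 < K ->
  Rbar_lt (Rbar_mult (Finite (/ K)) (Lub_Rbar S)) (Finite d) ->
  exists M, M < d * K /\ forall y, S y -> y <= M.
Proof.
  intros HK Hd; assert (HiK : 0 < / K) by (apply Rinv_0_lt_compat; exact HK).
  destruct (Lub_Rbar_correct S) as [Hub _].
  destruct (Lub_Rbar S) as [M | | ].
  - exists M; split; [|exact Hub].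
    simpl in Hd; apply (Rmult_lt_compat_r K) in Hd; [|exact HK].
    replace (/ K * M * K) with M in Hd by (field; lra); exact Hd.
  - rewrite (is_Rbar_mult_unique _ _ _
      (is_Rbar_mult_sym _ _ _ (is_Rbar_mult_p_infty_pos (/ K) HiK))) in Hd.
    destruct Hd.
  - exists (d * K - 1); split; [lra|].
    intros y Sy; destruct (Hub y Sy).
Qed.

Section nonlinearity.

Variables (g : R -> R -> R) (a A : R).
Hypotheses (g_zero : g 0 a = 0) (g_pos : forall v, v < 0 \/ a < v < 1 -> 0 < g v a).

(* Outside [1 - a/A <= s <= 1] the value [A (1 - s)] lies where [g] is
   positive (or at [0]), so the bound extends to all [s > 0]. *)
Lemma neg_g_le_linear M : 0 < A < 1 -> 0 <= M ->
  (forall s, 1 - a / A <= s <= 1 -> 0 < s -> - g (A * (1 - s)) a / (A * s) <= M) ->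
  forall s, 0 < s -> - g (A * (1 - s)) a <= M * (A * s).
Proof.
  intros HA HM Hbound s Hs.
  assert (HAs : 0 < A * s) by nra.
  assert (0 <= M * (A * s)) by nra.
  destruct (Rtotal_order s 1) as [Hlt | [-> | Hgt]].
  - destruct (Rle_lt_dec (A * (1 - s)) a) as [Hle | Hgt].
    + assert (Hs' : 1 - a / A <= s).
      { assert (a / A * A = a) by (field; lra).
        assert (1 - s <= a / A) by (apply (Rmult_le_reg_r A); nra).
        lra. }
      specialize (Hbound s (conj Hs' (Rlt_le _ _ Hlt)) Hs).
      apply (Rmult_le_compat_r (A * s)) in Hbound; [|lra].
      replace (- g (A * (1 - s)) a / (A * s) * (A * s)) with (- g (A * (1 - s)) a)
        in Hbound by (field; lra).
      exact Hbound.
    + assert (0 < g (A * (1 - s)) a) by (apply g_pos; right; nra); lra.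
  - replace (A * (1 - 1)) with 0 by ring; rewrite g_zero; lra.
  - assert (0 < g (A * (1 - s)) a) by (apply g_pos; left; nra); lra.
Qed.

Lemma dstar_lt_linear_bound l k d : 0 <= a -> 0 < A < 1 -> 1 < l < k ->
  Rbar_lt (dstar g a l A k) (Finite d) ->
  exists M, 0 <= M < d * ((k - l) * (1 - / l)) /\
    forall s, 0 < s -> - g (A * (1 - s)) a <= M * (A * s).
Proof.
  intros Ha HA Hl Hd; assert (Hil := Rinv_gt1_bounds l (proj1 Hl)).
  assert (HK : 0 < (k - l) * (1 - / l)) by (apply Rmult_lt_0_compat; lra).
  destruct (Lub_Rbar_scal_lt _ _ d HK Hd) as (M & HMd & HM).
  assert (HM0 : 0 <= M).
  { apply HM; exists 1; repeat split; try lra.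
    - assert (0 <= a / A) by (apply Rdiv_le_0_compat; lra); lra.
    - replace (A * (1 - 1)) with 0 by ring; rewrite g_zero; field; lra. }
  exists M; split; [lra|].
  apply (neg_g_le_linear M HA HM0).
  intros s Hs Hs0; apply HM; exists s; auto.
Qed.

End nonlinearity.

Section opI_Psi.

Variables (g : R -> R -> R) (a d k c l A : R).
Hypotheses (Hl : 1 < l) (HA : 0 < A) (Hd : 0 <= d)
  (g_pos_neg : forall v, v < 0 -> 0 < g v a).

Lemma opI_Psi_flat xi : 0 <= k -> xi <= -1 - / l -> opI g a d k c (Psi l A) xi <= 0.
Proof.
  intros Hk Hx; assert (Hil := Rinv_gt1_bounds l Hl).
  rewrite opI_second_diff, (Derive_Psi_flat l A Hl xi Hx).
  assert (H2 := second_diff_Psi_flat l A k Hl HA xi Hk Hx).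
  assert (Hg := g_pos_neg _ (Psi_lt_0 l A Hl HA xi ltac:(lra))).
  assert (0 <= d * second_diff k (Psi l A) xi) by (apply Rmult_le_pos; lra).
  lra.
Qed.

Lemma opI_Psi_cubic xi : l <= k -> 0 <= - c <= d * k * (l - 1) / l ^ 2 ->
  -1 - / l < xi <= -1 -> opI g a d k c (Psi l A) xi <= 0.
Proof.
  intros Hk Hc Hx; assert (HL := ln_gt_0 l Hl).
  rewrite opI_second_diff, (Derive_Psi_cubic l A Hl xi Hx).
  assert (H2 := second_diff_Psi_cubic l A k Hl HA xi Hk Hx).
  assert (Hg := g_pos_neg _ (Psi_lt_0 l A Hl HA xi (proj2 Hx))).
  assert (Ht := cubic_variable_bounds l Hl xi Hx).
  assert (Ht2 : (l * xi + 1 + l) ^ 2 <= 1) by (simpl; nra).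
  assert (HD : 0 <= A * ln l * l) by (apply Rmult_le_pos; [apply Rmult_le_pos|]; lra).
  assert (Hcd : - c * (A * ln l * l) <= d * (A * ln l * k * (l - 1) / l)).
  { apply Rle_trans with (d * k * (l - 1) / l ^ 2 * (A * ln l * l)).
    - apply Rmult_le_compat_r; lra.
    - right; field; lra. }
  assert (0 <= - c * (A * ln l * l)) by (apply Rmult_le_pos; lra).
  assert (- c * (A * ln l * l * (l * xi + 1 + l) ^ 2) <= - c * (A * ln l * l)) by nra.
  assert (d * (A * ln l * k * (l - 1) / l) <= d * second_diff k (Psi l A) xi)
    by (apply Rmult_le_compat_l; lra).
  lra.
Qed.

Lemma opI_Psi_exp M xi :
  (forall s, 0 < s -> - g (A * (1 - s)) a <= M * (A * s)) ->
  - c * ln l <= d * ((k - l) * (1 - / l)) - M ->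
  -1 < xi -> opI g a d k c (Psi l A) xi <= 0.
Proof.
  intros Hg Hc Hx.
  rewrite opI_second_diff, (Derive_Psi_exp l A Hl xi Hx), (Psi_exp l A Hl xi Hx).
  assert (H2 := second_diff_Psi_exp l A k Hl HA xi Hx).
  set (s := Rpower l (- xi)) in *.
  assert (Hs : 0 < s) by (apply exp_pos).
  assert (Hgs := Hg s Hs).
  assert (HAs : 0 < A * s) by nra.
  assert (A * s * (- c * ln l) <= A * s * (d * ((k - l) * (1 - / l)) - M))
    by (apply Rmult_le_compat_l; lra).
  assert (d * (A * s * ((k - l) * (1 - / l))) <= d * second_diff k (Psi l A) xi)
    by (apply Rmult_le_compat_l; lra).
  nra.
Qed.

Lemma opI_Psi_le_0 M : l <= k ->
  (forall s, 0 < s -> - g (A * (1 - s)) a <= M * (A * s)) ->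
  0 <= - c <= d * k * (l - 1) / l ^ 2 ->
  - c * ln l <= d * ((k - l) * (1 - / l)) - M ->
  forall xi, opI g a d k c (Psi l A) xi <= 0.
Proof.
  intros Hk Hg Hc_cubic Hc_exp xi.
  destruct (Rle_dec xi (-1 - / l)) as [Hflat | Hx].
  - apply opI_Psi_flat; lra.
  - destruct (Rle_dec xi (-1)) as [Hcubic | Hexp].
    + apply opI_Psi_cubic; lra.
    + apply (opI_Psi_exp M); lra || assumption.
Qed.

End opI_Psi.

Theorem lemma6p2 (g : R -> R -> R) (a A k l : R) :
  Hg g ->
  0 < a < 1 -> a <= A < 1 -> 1 < k -> 1 < l < k ->
  forall d : R, Rbar_lt (dstar g a l A k) (Finite d) ->
  exists cbar : R, cbar < 0 /\
    forall xi : R, opI g a d k cbar (Psi l A) xi <= 0.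
Proof.
  intros [gu [_ Hg]] Ha HA Hk Hl d Hd.
  destruct (Hg a Ha) as (g_zero & _ & _ & _ & _ & _ & g_pos & _).
  destruct (dstar_lt_linear_bound g a A g_zero g_pos l k d ltac:(lra) ltac:(lra) Hl Hd)
    as (M & [HM0 HMd] & Hg_lin).
  assert (HL := ln_gt_0 l (proj1 Hl)).
  assert (Hd0 : 0 < d).
  { assert (Hil := Rinv_gt1_bounds l (proj1 Hl)).
    assert (0 < (k - l) * (1 - / l)) by (apply Rmult_lt_0_compat; lra); nra. }
  set (c_exp := (d * ((k - l) * (1 - / l)) - M) / ln l).
  set (c_cubic := d * k * (l - 1) / l ^ 2).
  assert (Hc_exp : 0 < c_exp) by (apply Rdiv_lt_0_compat; lra).
  assert (Hc_cubic : 0 < c_cubic) by (apply Rdiv_lt_0_compat; [apply Rmult_lt_0_compat|]; nra).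
  assert (Hm := Rmin_pos _ _ Hc_exp Hc_cubic).
  exists (- Rmin c_exp c_cubic); split; [lra|].
  apply (opI_Psi_le_0 g a d k _ l A (proj1 Hl) ltac:(lra) ltac:(lra)
           ltac:(intros v Hv; apply g_pos; left; exact Hv) M ltac:(lra) Hg_lin).
  - rewrite Ropp_involutive; split; [lra | apply Rmin_r].
  - replace (- - Rmin c_exp c_cubic * ln l) with (Rmin c_exp c_cubic * ln l) by ring.
    apply Rle_trans with (c_exp * ln l); [apply Rmult_le_compat_r; [lra | apply Rmin_l]|].
    unfold c_exp; right; field; lra.
Qed.
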